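(* Let $V$ be a finite set of vertical lines and $H$ a finite set of horizontal closed segments in the plane. For a finite set $Q$ of points, let $H_Q\subseteq H$ be the set of segments of $H$ containing no point of $Q$, and let $h(\cdot)$ denote the minimum number of points needed to hit a set of horizontal segments. Suppose that (a) for every point $p$ lying on a line of $V$, $h(H_{\{p\}})=h(H)$, and (b) for every two points $p,q$ lying on two distinct lines of $V$, $h(H_{\{p,q\}})=h(H)$. Then every hitting set for $V\cup H$ has at least $|V|+h(H)$ points.
   Context: A hitting set for a family of subsets of the plane is a finite set of points such that every member contains at least one of the points. Segments may overlap arbitrarily. *)

From HB Require Import structures.
From mathcomp Require Import all_boot all_order all_algebra.
Set Implicit Arguments. Unset Strict Implicit. Unset Printing Implicit Defensive.
Import Order.TTheory GRing.Theory Num.Theory.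
Local Open Scope ring_scope.

Section Defs.
Variable R : realFieldType.

Definition point := (R * R)%type.

(* a vertical line {x = c} is represented by c *)
Definition on_vline (p : point) (c : R) : bool := p.1 == c.

(* a horizontal closed segment {(x, y0) | a <= x <= b} is represented by
   (y0, (a, b)); it is a genuine (nonempty) segment when a <= b *)
Definition hseg := (R * (R * R))%type.
Definition seg_ok (s : hseg) : bool := s.2.1 <= s.2.2.
Definition on_hseg (p : point) (s : hseg) : bool :=
  (p.2 == s.1) && (s.2.1 <= p.1 <= s.2.2).

Definition hits_segs (P : seq point) (H : seq hseg) : Prop :=
  forall s, s \in H -> exists2 p, p \in P & on_hseg p s.

Definition avoid (H : seq hseg) (Q : seq point) : seq hseg :=
  [seq s <- H | ~~ has (fun q => on_hseg q s) Q].

Definition is_h (H : seq hseg) (k : nat) : Prop :=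
  (exists P : seq point, uniq P /\ size P = k /\ hits_segs P H) /\
  (forall P : seq point, uniq P -> hits_segs P H -> (k <= size P)%N).

Definition hitting_set (Q : seq point) (V : seq R) (H : seq hseg) : Prop :=
  (forall c, c \in V -> exists2 q, q \in Q & on_vline q c) /\ hits_segs Q H.

End Defs.

From mathcomp Require Import zify.
From mathcomp Require Import all_boot all_order all_algebra.
Set Implicit Arguments.
Unset Strict Implicit.
Unset Printing Implicit Defensive.
Import Order.TTheory GRing.Theory Num.Theory.
Local Open Scope ring_scope.

(* Order the points of the plane by y, then by x.  A segment avoiding a point q
   lies entirely before or entirely after q, so two hitting sets can be cut at q
   and their halves exchanged.  For points T on distinct lines of V we get
   h(H_T) >= h(H) by induction on |T|: let p > q be the two last points of T,
   P a hitting set of H_T and P' an optimal hitting set of H_q (given by (a)).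
   Then (P below q) + (P' above q) hits H_(T - p) and (P' below q) + (P above q)
   hits H_(p,q), so by induction and (b) both have at least h(H) points, and
   |P| + h(H) >= 2 h(H).  In a hitting set Q of V and H pick one point on each
   line of V; the other points of Q hit H_T, hence |Q| >= |V| + h(H). *)

Lemma exists_seq_preimage (A B : eqType) (f : A -> B) (s : seq A) (t : seq B) :
  {in t, forall b, exists2 a, a \in s & f a = b} ->
  exists S, map f S = t /\ {subset S <= s}.
Proof.
elim: t => [|b t IH] st; first by exists [::].
have [S [<- Ss]] := IH (fun c ct => st c (mem_behead (s := b :: t) ct)).
have [a sa <-] := st b (mem_head _ _).
by exists (a :: S); split=> // x; rewrite in_cons => /predU1P[->|/Ss].
Qed.

Lemma size_filter_notin (A : eqType) (s t : seq A) : uniq t -> {subset t <= s} ->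
  (size t + size [seq x <- s | x \notin t] <= size s)%N.
Proof.
move=> ut ts; rewrite -(count_predC (mem t) s) size_filter leq_add2r -size_filter.
by apply: uniq_leq_size => // x xt; rewrite mem_filter ts // andbT.
Qed.

Section Sweep.
Variable R : realFieldType.
Implicit Types (u v q : point R) (s : hseg R) (H : seq (hseg R)) (P T : seq (point R)).

Definition sweep u : R *l R := (u.2, u.1).

Definition right_end s : point R := (s.2.2, s.1).

Lemma sweep_inj : injective sweep.
Proof. by case=> a b [c d] [-> ->]. Qed.

Lemma on_hseg_le_right_end {u s} : on_hseg u s -> (sweep u <= sweep (right_end s))%O.
Proof.
case: u s => u1 u2 [s1 [a b]] /andP[/eqP/= -> /andP[_ ub]].
by rewrite leEprodlexi /= lexx ub implybT.
Qed.

Lemma on_hseg_lt_off {u v s} : on_hseg u s -> ~~ on_hseg v s ->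
  (sweep u < sweep v)%O = (sweep (right_end s) < sweep v)%O.
Proof.
case: u v s => u1 u2 [v1 v2] [s1 [a b]] /andP[/eqP/= -> /andP[au ub]].
rewrite /on_hseg !ltEprodlexi /= negb_and negb_and -!ltNge.
case: (ltgtP s1 v2) => //= _ /orP[va|bv].
- by rewrite !ltNge (le_trans (ltW va) au) (le_trans (ltW va) (le_trans au ub)).
- by rewrite bv (le_lt_trans ub bv).
Qed.

Lemma lt_right_end_off {u v s} : on_hseg u s -> ~~ on_hseg v s ->
  ~~ (sweep (right_end s) < sweep v)%O -> (sweep v < sweep u)%O.
Proof.
move=> us vs; rewrite -(on_hseg_lt_off us vs) -leNgt le_eqVlt => /orP[|//].
by move/eqP/sweep_inj => vu; rewrite vu us in vs.
Qed.

Definition splice P q P' :=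
  [seq u <- P | (sweep u < sweep q)%O] ++ [seq u <- P' | (sweep q < sweep u)%O].

Lemma splice_uniq {P P'} q : uniq P -> uniq P' -> uniq (splice P q P').
Proof.
move=> uP uP'; rewrite cat_uniq !filter_uniq // andbT; apply/hasPn => u.
by rewrite !mem_filter => /andP[qu _]; rewrite lt_gtF.
Qed.

Lemma size_splice P q P' :
  (size (splice P q P') + size (splice P' q P) <= size P + size P')%N.
Proof.
pose below u := (sweep u < sweep q)%O; pose above u := (sweep q < sweep u)%O.
have split_size S : (count below S + count above S <= size S)%N.
  rewrite -count_predUI (@eq_count _ (predI _ _) pred0) ?count_pred0 ?addn0.
    exact: count_size.
  by move=> u; rewrite /= /below /above andbC; apply/negbTE/negP => /andP[/lt_gtF->].
rewrite /splice !size_cat !size_filter.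
by have := split_size P; have := split_size P'; rewrite -/below -/above; lia.
Qed.

Lemma hits_splice H H1 H2 P q P' :
  {in H, forall s, ~~ on_hseg q s} ->
  {in H, forall s, (sweep (right_end s) < sweep q)%O -> s \in H1} ->
  {in H, forall s, ~~ (sweep (right_end s) < sweep q)%O -> s \in H2} ->
  hits_segs P H1 -> hits_segs P' H2 -> hits_segs (splice P q P') H.
Proof.
move=> qH lowH1 highH2 hitP hitP' s sH; have qs := qH s sH.
have [low|high] := boolP (sweep (right_end s) < sweep q)%O.
- have [u uP us] := hitP s (lowH1 s sH low).
  by exists u => //; rewrite mem_cat mem_filter uP (on_hseg_lt_off us qs) low.
- have [u uP' us] := hitP' s (highH2 s sH high).
  by exists u => //; rewrite mem_cat !mem_filter uP' (lt_right_end_off us qs high) orbT.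
Qed.

Lemma mem_avoid H T s : (s \in avoid H T) = (s \in H) && all (fun t => ~~ on_hseg t s) T.
Proof. by rewrite mem_filter all_predC andbC. Qed.

Lemma avoid0 H : avoid H [::] = H.
Proof. by rewrite /avoid filter_predT. Qed.

Lemma hits_splice_tail {H p q T P P'} : (sweep q < sweep p)%O ->
  hits_segs P (avoid H [:: p, q & T]) -> hits_segs P' (avoid H [:: q]) ->
  hits_segs (splice P q P') (avoid H (q :: T)).
Proof.
move=> qp; apply: hits_splice => s; rewrite !mem_avoid /= => /and3P[sH qs sT] //.
  move=> low; rewrite sH qs sT /= andbT; apply/negP => ps.
  by have := le_lt_trans (on_hseg_le_right_end ps) (lt_trans low qp); rewrite ltxx.
by rewrite sH qs.
Qed.

Lemma hits_splice_pair {H p q T P P'} : {in T, forall t, sweep t <= sweep q}%O ->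
  hits_segs P' (avoid H [:: q]) -> hits_segs P (avoid H [:: p, q & T]) ->
  hits_segs (splice P' q P) (avoid H [:: p; q]).
Proof.
move=> Tq; apply: hits_splice => s; rewrite !mem_avoid /= andbT => /and3P[sH ps qs] //.
  by rewrite sH qs.
move=> high; rewrite sH ps qs /=; apply/allP => t tT; apply/negP => ts.
by have := lt_right_end_off ts qs high; rewrite ltNge Tq.
Qed.

Definition hits_lb H k := forall P, uniq P -> hits_segs P H -> (k <= size P)%N.

Lemma hits_lb_avoid_sorted (V : seq R) H k :
  hits_lb H k ->
  (forall p, p.1 \in V -> is_h (avoid H [:: p]) k) ->
  (forall p q, p.1 \in V -> q.1 \in V -> p.1 != q.1 -> hits_lb (avoid H [:: p; q]) k) ->
  forall T, sorted (fun u v => sweep v <= sweep u)%O T ->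
  {subset map fst T <= V} -> uniq (map fst T) -> hits_lb (avoid H T) k.
Proof.
move=> lbH hV1 hV2; elim=> [|p [|q T] IH] sortT TV uT; first by rewrite avoid0.
  exact: (hV1 p (TV _ (mem_head _ _))).2.
have ge_trans : transitive (fun u v => sweep v <= sweep u)%O.
  by move=> v u w uv vw; apply: le_trans vw uv.
move: sortT => /= /andP[qp sortT]; have Tq := order_path_min ge_trans sortT.
have /andP[pq uT'] : (p.1 != q.1) && uniq (map fst (q :: T)).
  by move: uT; rewrite /= in_cons negb_or -andbA => /and3P[-> _ ->].
have TV' : {subset map fst (q :: T) <= V} by move=> c cT; apply: TV; rewrite in_cons cT orbT.
have ltqp : (sweep q < sweep p)%O.
  by rewrite lt_neqAle qp andbT; apply: contra pq => /eqP/sweep_inj ->.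
move=> P uP hitP.
have [[P' [uP' [sP' hitP']]] _] := hV1 q (TV' _ (mem_head _ _)).
have pV : p.1 \in V by apply: TV; exact: mem_head.
have lb1 := IH sortT TV' uT' _ (splice_uniq q uP uP') (hits_splice_tail ltqp hitP hitP').
have lb2 := hV2 p q pV (TV' _ (mem_head _ _)) pq _ (splice_uniq q uP' uP)
  (hits_splice_pair (allP Tq) hitP' hitP).
by have := size_splice P q P'; rewrite sP'; lia.
Qed.

Lemma hits_avoid_filter H T Q :
  hits_segs Q H -> hits_segs [seq u <- Q | u \notin T] (avoid H T).
Proof.
move=> hitQ s; rewrite mem_avoid => /andP[sH /allP sT].
have [u uQ us] := hitQ s sH; exists u => //.
by rewrite mem_filter uQ andbT; apply: contraL us => /sT.
Qed.
End Sweep.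

Theorem mainTheorem11 (R : realFieldType) (V : seq R) (H : seq (hseg R))
  (hV : uniq V) (hH : forall s, s \in H -> seg_ok s)
  (ha : forall (p : point R) (c : R), c \in V -> on_vline p c ->
          forall k, is_h H k <-> is_h (avoid H [:: p]) k)
  (hb : forall (p q : point R) (c d : R), c \in V -> d \in V -> c != d ->
          on_vline p c -> on_vline q d ->
          forall k, is_h H k <-> is_h (avoid H [:: p; q]) k) :
  forall (Q : seq (point R)), uniq Q -> hitting_set Q V H ->
  forall k, is_h H k -> (size V + k <= size Q)%N.
Proof.
move=> Q uQ [QV hitQ] k hk.
have [S [SV SQ]] : exists S, map fst S = V /\ {subset S <= Q}.
  by apply: exists_seq_preimage => c /QV[q qQ /eqP]; exists q.
pose T := sort (fun u v => sweep v <= sweep u)%O S.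
have TS : perm_eq T S by rewrite /T perm_sort.
have TV : perm_eq (map fst T) V by rewrite -SV; apply: perm_map.
have lbT : hits_lb (avoid H T) k.
  apply: (hits_lb_avoid_sorted (V := V) hk.2) => [p pV | p q pV qV pq | | c | ].
  - exact: (ha p p.1 pV (eqxx _) k).1 hk.
  - exact: ((hb p q p.1 q.1 pV qV pq (eqxx _) (eqxx _) k).1 hk).2.
  - exact: sort_sorted (fun u v => le_total (sweep v) (sweep u)) S.
  - by rewrite (perm_mem TV).
  - by rewrite (perm_uniq TV).
have uT : uniq T by rewrite (perm_uniq TS); move: hV; rewrite -SV; apply: map_uniq.
have TQ : {subset T <= Q} by move=> u; rewrite (perm_mem TS); apply: SQ.
have lbQ := lbT _ (filter_uniq _ uQ) (hits_avoid_filter (T := T) hitQ).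
rewrite -(perm_size TV) size_map.
by apply: leq_trans (size_filter_notin uT TQ); rewrite leq_add2l.
Qed.
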